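(* Let $\lambda\in P^+$. For a POP $\mathcal P$ with bounding sequence $\lambda$, with associated element $v_{\mathcal P}\in\mathbf U(\mathfrak n^-[t])$, the $\mathfrak h$-weight of $v_{\mathcal P}\,w_\lambda$ in $W(\lambda)$ equals the weight of $\mathcal P$.
   Context: Fix $r\ge 1$. Let $\mathfrak{g}=\mathfrak{sp}_{2r}$ be the Lie algebra of complex $2r\times 2r$ matrices $(a_{i,j})$, rows and columns indexed by $1,\dots,r,-r,\dots,-1$, with $a_{i,j}=-\mathrm{sgn}(i)\,\mathrm{sgn}(j)\,a_{-j,-i}$; $E_{i,j}$ are matrix units. The Cartan subalgebra $\mathfrak h$ is spanned by $E_{i,i}-E_{-i,-i}$, $i\in I=\{1,\dots,r\}$, and $\varepsilon_i\in\mathfrak h^*$ satisfy $\langle \varepsilon_i, E_{j,j}-E_{-j,-j}\rangle=\delta_{i,j}$. Root vectors: for $1\le i<j\le r$, $x^+_{i,j-1}=E_{i,j}-E_{-j,-i}$, $x^-_{i,j-1}=E_{j,i}-E_{-i,-j}$, $x^+_{i,\overline{j}}=E_{i,-j}+E_{j,-i}$, $x^-_{i,\overline{j}}=E_{-j,i}+E_{-i,j}$; $x^+_{i,\overline{i}}=E_{i,-i}$, $x^-_{i,\overline{i}}=E_{-i,i}$; $x^\pm_{i,r}:=x^\pm_{i,\overline{r}}$. Let $\mathfrak n^\pm$ be spanned by $x^\pm_{i,j}$ ($1\le i\le j<r$) and $x^\pm_{i,\overline{j}}$ ($1\le i\le j\le r$). Fundamental weights $\omega_i=\varepsilon_1+\dots+\varepsilon_i$;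 $P^+=\sum_i\mathbb N\omega_i$; for $\lambda=\sum m_i\omega_i$ put $\lambda_i=m_i+\dots+m_r$. $\mathfrak g[t]=\mathfrak g\otimes\mathbb C[t]$ is the current algebra. The local Weyl module $W(\lambda)$ is the cyclic $\mathfrak g[t]$-module generated by $w_\lambda$ with relations $\mathfrak n^+[t]w_\lambda=0$, $(h\otimes t^s)w_\lambda=\langle\lambda,h\rangle\delta_{s,0}w_\lambda$, $(x^-_{i,i})^{m_i+1}w_\lambda=0$. A pattern with bounding sequence $\lambda$: integers $\eta^j_i,\lambda^j_i$ ($1\le i\le j\le r$), $\lambda^r_i=\lambda_i$, with $\lambda^j_i\ge\eta^j_i\ge\lambda^j_{i+1}$ ($1\le i\le j\le r$, $\lambda^j_{j+1}=0$) and $\eta^{j+1}_i\ge\lambda^j_i\ge\eta^{j+1}_{i+1}$ ($1\le i\le j<r$). Its weight is $\sum_{j=1}^r a_j\varepsilon_j$ with $a_j=2\sum_{i=1}^j\eta^j_i-\sum_{i=1}^j\lambda^j_i-\sum_{i=1}^{j-1}\lambda^{j-1}_i$. Differences: $\ell_{i,\overline{j}}=\lambda^j_i-\eta^j_i$, $\ell'_{i,\overline{j}}=\eta^j_i-\lambda^j_{i+1}$ ($1\le i\le j\le r$); $\ell_{i,j}=\eta^{j+1}_i-\lambda^j_i$, $\ell'_{i,j}=\lambda^j_i-\eta^{j+1}_{i+1}$ ($1\le i\le j<r$). A partition $\mathbf s=(\mathbf s(1)\le\dots\le\mathbf s(\ell))\in\mathbb N^\ell$ fits into $(\ell,\ell')$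 if $\mathbf s(\ell)\le\ell'$. A POP is a pattern with partitions $\mathbf s_{i,\overline{j}}$ fitting $(\ell_{i,\overline{j}},\ell'_{i,\overline{j}})$ and $\mathbf s_{i,j}$ fitting $(\ell_{i,j},\ell'_{i,j})$; its weight is the weight of its pattern. With $\mathbf{x}(\ell,\mathbf s)=(x\otimes t^{\mathbf s(1)})\cdots(x\otimes t^{\mathbf s(\ell)})$, the associated element is $v_{\mathcal P}=X_{\overline1}X_1\cdots X_{\overline{r-1}}X_{r-1}X_{\overline r}$, $X_{\overline j}=\prod_{i=1}^{j}\mathbf x^-_{i,\overline j}(\ell_{i,\overline j},\mathbf s_{i,\overline j})$, $X_j=\prod_{i=1}^{j}\mathbf x^-_{i,j}(\ell_{i,j},\mathbf s_{i,j})$ (factors in increasing order of $i$). *)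

From HB Require Import structures.
From mathcomp Require Import all_boot all_order all_algebra.
From mathcomp Require Import reals complex.
Set Implicit Arguments. Unset Strict Implicit. Unset Printing Implicit Defensive.
Import Order.TTheory GRing.Theory Num.Theory.
Local Open Scope ring_scope.

Section SpCurrent.
Variable C : fieldType.
Variable r : nat.

(* Row/column indices 1..r, -r..-1 : inl k stands for k+1, inr k for -(k+1). *)
Definition Idx := ('I_r + 'I_r)%type.

Definition lab (c : Idx) : int :=
  match c with inl k => (k.+1)%:Z | inr k => - (k.+1)%:Z end.

Definition negi (c : Idx) : Idx :=
  match c with inl k => inr k | inr k => inl k end.

Definition sgni (c : Idx) : C :=
  match c with inl _ => 1 | inr _ => -1 end.

Definition mat := Idx -> Idx -> C.
(* elements of gl_{2r}[t] = gl_{2r} (x) C[t] : matrices with polynomial entries *)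
Definition cmat := Idx -> Idx -> {poly C}.

Definition is_sp (X : cmat) : Prop :=
  forall c d, X c d = - (sgni c * sgni d) *: X (negi d) (negi c).

Definition cadd (X Y : cmat) : cmat := fun a b => X a b + Y a b.
Definition cscale (k : C) (X : cmat) : cmat := fun a b => k *: X a b.
Definition cbracket (X Y : cmat) : cmat :=
  fun a b => \sum_(c : Idx) (X a c * Y c b - Y a c * X c b).

Definition tens (x : mat) (s : nat) : cmat := fun a b => x a b *: 'X^s.

Definition Emat (a b : int) : mat :=
  fun c d => if (lab c == a) && (lab d == b) then 1 else 0.

Definition madd (x y : mat) : mat := fun a b => x a b + y a b.
Definition msub (x y : mat) : mat := fun a b => x a b - y a b.

Definition hvec (i : nat) : mat := msub (Emat i%:Z i%:Z) (Emat (- i%:Z) (- i%:Z)).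

Definition xplus (i j : nat) : mat :=
  msub (Emat i%:Z (j.+1)%:Z) (Emat (- (j.+1)%:Z) (- i%:Z)).
Definition xminus (i j : nat) : mat :=
  msub (Emat (j.+1)%:Z i%:Z) (Emat (- i%:Z) (- (j.+1)%:Z)).

Definition xplusb (i j : nat) : mat :=
  if i == j then Emat i%:Z (- i%:Z)
  else madd (Emat i%:Z (- j%:Z)) (Emat j%:Z (- i%:Z)).
Definition xminusb (i j : nat) : mat :=
  if i == j then Emat (- i%:Z) i%:Z
  else madd (Emat (- j%:Z) i%:Z) (Emat (- i%:Z) j%:Z).

(* x^-_{i,i} with the convention x^-_{r,r} := x^-_{r,\bar r} *)
Definition xminus_ii (i : nat) : mat :=
  if (i < r)%N then xminus i i else xminusb i i.

Definition is_rep (M : lmodType C) (rho : cmat -> M -> M) : Prop :=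
  [/\ (forall X (k : C) (u v : M), is_sp X -> rho X (k *: u + v) = k *: rho X u + rho X v),
      (forall X Y (k : C) (v : M), is_sp X -> is_sp Y ->
          rho (cadd (cscale k X) Y) v = k *: rho X v + rho Y v) &
      (forall X Y (v : M), is_sp X -> is_sp Y ->
          rho (cbracket X Y) v = rho X (rho Y v) - rho Y (rho X v))].

(* lambda = sum_i m_i omega_i ; lambda_i = m_i + ... + m_r (1-based) *)
Definition lamb (m : nat -> nat) (i : nat) : nat := \sum_(i <= k < r.+1) m k.

Definition weyl_relations (M : lmodType C) (rho : cmat -> M -> M)
    (m : nat -> nat) (w : M) : Prop :=
  [/\ (forall i j s, (1 <= i)%N -> (i <= j)%N -> (j < r)%N -> rho (tens (xplus i j) s) w = 0),
      (forall i j s, (1 <= i)%N -> (i <= j)%N -> (j <= r)%N -> rho (tens (xplusb i j) s) w = 0),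
      (forall i s, (1 <= i)%N -> (i <= r)%N ->
          rho (tens (hvec i) s) w = (if s == 0%N then (lamb m i)%:R else 0) *: w) &
      (forall i, (1 <= i)%N -> (i <= r)%N ->
          iter (m i).+1 (rho (tens (xminus_ii i) 0)) w = 0)].

(* eta j i = eta^j_i, lp j i = lambda^j_i (1-based) *)

Definition fits (s : seq nat) (l l' : int) : bool :=
  [&& (size s)%:Z == l, sorted leq s & all (fun x => x%:Z <= l') s].

Definition is_pattern (lam : nat -> nat) (eta lp : nat -> nat -> int) : Prop :=
  [/\ (forall i, (1 <= i)%N -> (i <= r)%N -> lp r i = (lam i)%:Z),
      (forall i j, (1 <= i)%N -> (i <= j)%N -> (j <= r)%N ->
          lp j i >= eta j i /\ eta j i >= (if (i < j)%N then lp j i.+1 else 0)) &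
      (forall i j, (1 <= i)%N -> (i <= j)%N -> (j < r)%N ->
          eta j.+1 i >= lp j i /\ lp j i >= eta j.+1 i.+1)].

Definition ellb (eta lp : nat -> nat -> int) (i j : nat) : int := lp j i - eta j i.
Definition ellb' (eta lp : nat -> nat -> int) (i j : nat) : int :=
  eta j i - (if (i < j)%N then lp j i.+1 else 0).
Definition ell (eta lp : nat -> nat -> int) (i j : nat) : int := eta j.+1 i - lp j i.
Definition ell' (eta lp : nat -> nat -> int) (i j : nat) : int := lp j i - eta j.+1 i.+1.

(* sb j i = s_{i,\bar j},  sn j i = s_{i,j} *)
Definition is_POP (lam : nat -> nat) (eta lp : nat -> nat -> int)
    (sb sn : nat -> nat -> seq nat) : Prop :=
  [/\ is_pattern lam eta lp,
      (forall i j, (1 <= i)%N -> (i <= j)%N -> (j <= r)%N ->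
          fits (sb j i) (ellb eta lp i j) (ellb' eta lp i j)) &
      (forall i j, (1 <= i)%N -> (i <= j)%N -> (j < r)%N ->
          fits (sn j i) (ell eta lp i j) (ell' eta lp i j))].

Definition pattern_weight (eta lp : nat -> nat -> int) (j : nat) : int :=
  2 * (\sum_(1 <= i < j.+1) eta j i) - (\sum_(1 <= i < j.+1) lp j i)
    - (\sum_(1 <= i < j) lp j.-1 i).

(* x(l, s) as a word (list of factors, leftmost first) *)
Definition xword (x : mat) (s : seq nat) : seq cmat := map (tens x) s.

Definition Xbar (sb : nat -> nat -> seq nat) (j : nat) : seq cmat :=
  flatten [seq xword (xminusb i j) (sb j i) | i <- iota 1 j].
Definition Xn (sn : nat -> nat -> seq nat) (j : nat) : seq cmat :=
  flatten [seq xword (xminus i j) (sn j i) | i <- iota 1 j].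

(* v_P = X_{\bar 1} X_1 ... X_{\bar{r-1}} X_{r-1} X_{\bar r} as a word *)
Definition vword (sb sn : nat -> nat -> seq nat) : seq cmat :=
  flatten [seq Xbar sb j ++ Xn sn j | j <- iota 1 r.-1] ++ Xbar sb r.

Definition act_word (M : lmodType C) (rho : cmat -> M -> M) (L : seq cmat) (v : M) : M :=
  foldr (fun X u => rho X u) v L.

End SpCurrent.

From HB Require Import structures.
From mathcomp Require Import all_boot all_order all_algebra.
From mathcomp Require Import reals complex.
From mathcomp Require Import ring zify.
From Stdlib Require Import FunctionalExtensionality.
Set Implicit Arguments. Unset Strict Implicit. Unset Printing Implicit Defensive.
Import Order.TTheory GRing.Theory Num.Theory.
Local Open Scope ring_scope.

(* Each factor x (x) t^s of v_P is a root vector, [h (x) 1, x (x) t^s] = alpha(h) x (x) t^s,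
   so it shifts the eigenvalue of an h-eigenvector by alpha(h); w_lambda has eigenvalue
   lambda_k for h = h_k.  The factors of X_{\bar j} have roots -eps_i - eps_j and those
   of X_j roots eps_{j+1} - eps_i, occurring l_{i,\bar j}, resp. l_{i,j} times.  In the
   eps_k-coordinate of the total shift the row i = k of the pattern telescopes,
   sum_{j >= k} (l_{k,\bar j} + l_{k,j}) = lambda_k - eta^k_k, and what is left over is
   exactly a_k. *)

Lemma sum_nat_delta (F : nat -> int) m n k :
  \sum_(m <= i < n) F i * (i == k)%:Z = F k * (m <= k < n)%:Z.
Proof.
rewrite (eq_bigr (fun i => if i == k then F i else 0)) => [|i _]; last first.
  by case: eqP; rewrite ?mulr1 ?mulr0.
by rewrite -big_mkcond big_nat1_eq; case: ifP; rewrite ?mulr1 ?mulr0.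
Qed.

Lemma sum_nat_from (F : nat -> int) m n k : (m <= k <= n)%N ->
  \sum_(m <= j < n) F j * (k <= j)%:Z = \sum_(k <= j < n) F j.
Proof.
case/andP=> le_mk le_kn; rewrite (big_cat_nat le_mk le_kn) /=.
rewrite big_nat_cond big1 ?add0r => [|j /andP[/andP[_ lt_jk] _]]; last first.
  by rewrite leqNgt lt_jk mulr0.
by apply: eq_big_nat => j /andP[le_kj _]; rewrite le_kj mulr1.
Qed.

Section PatternWeight.
Variables eta lp : nat -> nat -> int.

Lemma sum_row_differences n k : (k <= n)%N ->
  \sum_(k <= j < n.+1) ellb eta lp k j + \sum_(k <= j < n) ell eta lp k j
  = lp n k - eta k k.
Proof.
move=> le_kn; rewrite big_nat_recr //= addrAC -big_split /=.
rewrite (eq_bigr (fun j => eta j.+1 k - eta j k)) => [|j _]; last first.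
  by rewrite /ellb /ell; ring.
by rewrite telescope_sumr // /ellb; ring.
Qed.

(* The eps_k-coordinates of the weights of X_{\bar j} and X_j when the partitions
   s_{i,\bar j} and s_{i,j} have lengths [b j i] and [c j i]. *)
Definition Xbar_weight (b : nat -> nat -> int) (k j : nat) : int :=
  - \sum_(1 <= i < j.+1) b j i * ((i == k)%:Z + (j == k)%:Z).
Definition Xn_weight (c : nat -> nat -> int) (k j : nat) : int :=
  \sum_(1 <= i < j.+1) c j i * ((j.+1 == k)%:Z - (i == k)%:Z).

Lemma Xbar_weightE b k j : (0 < k)%N ->
  Xbar_weight b k j
  = - (b j k * (k <= j)%:Z + (\sum_(1 <= i < j.+1) b j i) * (j == k)%:Z).
Proof.
move=> k_gt0; rewrite /Xbar_weight.
under eq_bigr do rewrite mulrDr.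
by rewrite big_split sum_nat_delta -mulr_suml /= k_gt0 ltnS.
Qed.

Lemma Xn_weightE c k j : (0 < k)%N ->
  Xn_weight c k j
  = (\sum_(1 <= i < j.+1) c j i) * (j.+1 == k)%:Z - c j k * (k <= j)%:Z.
Proof.
move=> k_gt0; rewrite /Xn_weight.
under eq_bigr do rewrite mulrBr.
by rewrite sumrB sum_nat_delta -mulr_suml /= k_gt0 ltnS.
Qed.

Lemma sum_Xbar_weight b n k : (0 < k)%N -> (k <= n)%N ->
  \sum_(1 <= j < n.+1) Xbar_weight b k j
  = - (\sum_(k <= j < n.+1) b j k + \sum_(1 <= i < k.+1) b k i).
Proof.
move=> k_gt0 le_kn.
under eq_bigr do rewrite Xbar_weightE //.
rewrite sumrN big_split /= sum_nat_from ?k_gt0 ?leqW //.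
by rewrite (sum_nat_delta (fun j => \sum_(1 <= i < j.+1) b j i)) k_gt0 ltnS le_kn mulr1.
Qed.

Lemma sum_Xn_weight c n k : (k < n)%N ->
  \sum_(1 <= j < n) Xn_weight c k.+1 j
  = \sum_(1 <= i < k.+1) c k i - \sum_(k.+1 <= j < n) c j k.+1.
Proof.
move=> lt_kn.
under eq_bigr do rewrite Xn_weightE // eqSS.
rewrite sumrB sum_nat_from ?lt_kn // sum_nat_delta.
case: k lt_kn => [|k] lt_kn; last by rewrite /= lt_kn mulr1.
by rewrite big_geq // mul0r.
Qed.

Lemma pattern_weight_of_lengths b c n k :
  (forall i j, (0 < i)%N -> (i <= j)%N -> (j <= n)%N -> b j i = ellb eta lp i j) ->
  (forall i j, (0 < i)%N -> (i <= j)%N -> (j < n)%N -> c j i = ell eta lp i j) ->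
  (0 < k)%N -> (k <= n)%N ->
  lp n k + \sum_(1 <= j < n.+1) Xbar_weight b k j
    + \sum_(1 <= j < n) Xn_weight c k j
  = pattern_weight eta lp k.
Proof.
case: k => [//|k] bE cE _ lt_kn.
rewrite sum_Xbar_weight // sum_Xn_weight //.
have -> : \sum_(k.+1 <= j < n.+1) b j k.+1 = \sum_(k.+1 <= j < n.+1) ellb eta lp k.+1 j.
  by apply: eq_big_nat => j /andP[le_kj lt_jn]; rewrite bE.
have -> : \sum_(1 <= i < k.+2) b k.+1 i = \sum_(1 <= i < k.+2) ellb eta lp i k.+1.
  by apply: eq_big_nat => i /andP[i_gt0 lt_ik]; rewrite bE.
have -> : \sum_(1 <= i < k.+1) c k i = \sum_(1 <= i < k.+1) ell eta lp i k.
  by apply: eq_big_nat => i /andP[i_gt0 lt_ik]; rewrite cE // -ltnS ltnW.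
have -> : \sum_(k.+1 <= j < n) c j k.+1 = \sum_(k.+1 <= j < n) ell eta lp k.+1 j.
  by apply: eq_big_nat => j /andP[le_kj lt_jn]; rewrite cE.
have row := sum_row_differences lt_kn.
rewrite /pattern_weight /ellb /ell !sumrB in row *.
rewrite !(@big_nat_recr _ _ _ k.+1 1) //=.
by rewrite -(subrK (eta k.+1 k.+1) (lp n k.+1)) -row; ring.
Qed.

End PatternWeight.

(* The eps_k-coordinate of eps_z, where eps_{-i} = -eps_i: the diagonal entry
   of h_k in the row labelled z. *)
Definition eps (k : nat) (z : int) : int := (z == k%:Z)%:Z - (z == - k%:Z)%:Z.

Lemma eps_opp k z : eps k (- z) = - eps k z.
Proof. by rewrite /eps eqr_opp eqr_oppLR opprB. Qed.

Lemma eps_nat k n : (0 < k)%N -> eps k n%:Z = (n == k)%:Z.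
Proof.
move=> k_gt0; rewrite /eps eqz_nat.
have -> : (n%:Z == - k%:Z) = false by apply/eqP; lia.
by rewrite subr0.
Qed.

Section Matrices.
Variables (C : fieldType) (r : nat).
Implicit Types (p q : int) (a b c d : Idx r) (x y : mat C r).

Lemma lab_inj : injective (@lab r).
Proof.
case=> [a|a] [b|b] /= eq_ab.
- by congr inl; apply: val_inj; case: eq_ab.
- by move: eq_ab; lia.
- by move: eq_ab; lia.
- by congr inr; apply: val_inj; case: (oppr_inj eq_ab).
Qed.

Lemma lab_negi a : lab (negi a) = - lab a.
Proof. by case: a => a /=; rewrite ?opprK. Qed.

Lemma sgni_lab a : sgni C a = if 0 < lab a then 1 else -1.
Proof. by case: a => a /=; rewrite ?oppr_gt0 ?ltz_nat. Qed.

Lemma Emat_negi p q c d : Emat C p q (negi d) (negi c) = Emat C (- q) (- p) c d.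
Proof. by rewrite /Emat !lab_negi !eqr_oppLR andbC. Qed.

Lemma Emat_sgni p q c d :
  sgni C c * sgni C d * Emat C p q c d
  = (if (0 < p) == (0 < q) then 1 else -1) * Emat C p q c d.
Proof.
rewrite /Emat; case: ifP => [/andP[/eqP <- /eqP <-]|_]; last by rewrite !mulr0.
by rewrite !sgni_lab; case: (0 < lab c); case: (0 < lab d) => /=; ring.
Qed.

Definition sp_mat x := forall c d, x c d = - (sgni C c * sgni C d) * x (negi d) (negi c).

Lemma sp_tens x s : sp_mat x -> is_sp (tens x s).
Proof. by move=> sp_x c d; rewrite /tens sp_x scalerA. Qed.

Lemma sp_Emat_sub p q : 0 < p -> 0 < q ->
  sp_mat (msub (Emat C p q) (Emat C (- q) (- p))).
Proof.
move=> p_gt0 q_gt0 c d; rewrite /msub !Emat_negi !opprK mulrBr !mulNr !Emat_sgni.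
by rewrite !oppr_gt0 p_gt0 q_gt0 (lt_gtF p_gt0) (lt_gtF q_gt0) /=; ring.
Qed.

Lemma sp_Emat_add p q : p < 0 -> 0 < q ->
  sp_mat (madd (Emat C p q) (Emat C (- q) (- p))).
Proof.
move=> p_lt0 q_gt0 c d; rewrite /madd !Emat_negi !opprK mulrDr !mulNr !Emat_sgni.
by rewrite !oppr_gt0 p_lt0 q_gt0 (lt_gtF p_lt0) (lt_gtF q_gt0) /=; ring.
Qed.

Lemma sp_Emat_low p : 0 < p -> sp_mat (Emat C (- p) p).
Proof.
move=> p_gt0 c d; rewrite Emat_negi opprK mulNr Emat_sgni.
by rewrite oppr_gt0 p_gt0 (lt_gtF p_gt0) /=; ring.
Qed.

Lemma sp_hvec k : (0 < k)%N -> sp_mat (hvec C k).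
Proof. by move=> k_gt0; apply: sp_Emat_sub; rewrite ltz_nat. Qed.

Lemma sp_xminus i j : (0 < i)%N -> sp_mat (xminus C i j).
Proof. by move=> i_gt0; apply: sp_Emat_sub; rewrite ltz_nat. Qed.

Lemma sp_xminusb i j : (0 < i)%N -> (0 < j)%N -> sp_mat (xminusb C i j).
Proof.
move=> i_gt0 j_gt0; rewrite /xminusb; case: eqP => [_|_].
  by apply: sp_Emat_low; rewrite ltz_nat.
by have := @sp_Emat_add (- j%:Z) i%:Z; rewrite opprK; apply; rewrite ?oppr_lt0 ltz_nat.
Qed.

Lemma hvec_diag k a b :
  hvec C k a b = if a == b then (eps k (lab a))%:~R else 0.
Proof.
rewrite /hvec /msub /Emat; case: (a =P b) => [<-|neq_ab].
  by rewrite !andbb /eps intrB; do 2 case: (_ == _).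
have off z : (lab a == z) && (lab b == z) = false.
  by apply/andP => -[/eqP la /eqP lb]; apply: neq_ab; apply: lab_inj; rewrite la lb.
by rewrite !off subrr.
Qed.

Definition hweight k x (al : int) :=
  forall a b, ((eps k (lab a) - eps k (lab b))%:~R : C) * x a b = al%:~R * x a b.

Lemma Emat_hweight k p q : hweight k (Emat C p q) (eps k p - eps k q).
Proof.
by move=> a b; rewrite /Emat; case: ifP => [/andP[/eqP -> /eqP ->]|_]; rewrite ?mulr0.
Qed.

Lemma hweight_sub k x y al : hweight k x al -> hweight k y al -> hweight k (msub x y) al.
Proof. by move=> wx wy a b; rewrite /msub !mulrBr wx wy. Qed.

Lemma hweight_add k x y al : hweight k x al -> hweight k y al -> hweight k (madd x y) al.
Proof. by move=> wx wy a b; rewrite /madd !mulrDr wx wy. Qed.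

Lemma hweight_xminus k i j :
  hweight k (xminus C i j) (eps k (j.+1)%:Z - eps k i%:Z).
Proof.
apply: hweight_sub; first exact: Emat_hweight.
by have := Emat_hweight k (- i%:Z) (- (j.+1)%:Z); rewrite !eps_opp opprK addrC.
Qed.

Lemma hweight_xminusb k i j :
  hweight k (xminusb C i j) (- eps k i%:Z - eps k j%:Z).
Proof.
rewrite /xminusb; case: eqP => [<-|_].
  by have := Emat_hweight k (- i%:Z) i%:Z; rewrite eps_opp.
apply: hweight_add.
  by have := Emat_hweight k (- j%:Z) i%:Z; rewrite eps_opp addrC.
by have := Emat_hweight k (- i%:Z) j%:Z; rewrite eps_opp.
Qed.

Lemma bracket_diag h x (u : Idx r -> C) s :
  (forall a b, h a b = if a == b then u a else 0) ->
  cbracket (tens h 0) (tens x s) = fun a b => ((u a - u b) * x a b) *: 'X^s.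
Proof.
move=> h_diag; apply: functional_extensionality => a.
apply: functional_extensionality => b.
rewrite /cbracket /tens sumrB (bigD1 a) //= [X in _ - X](bigD1 b) //=.
rewrite [X in _ + X - _]big1 => [|c /negbTE c_a]; last first.
  by rewrite h_diag eq_sym c_a scale0r mul0r.
rewrite [X in _ - (_ + X)]big1 => [|c /negbTE c_b]; last first.
  by rewrite h_diag c_b scale0r mulr0.
rewrite !addr0 !h_diag !eqxx expr0 -!scalerAl -!scalerAr mul1r mulr1 !scalerA -scalerBl.
by congr (_ *: _); ring.
Qed.

Lemma bracket_hvec k x al s : hweight k x al ->
  cbracket (tens (hvec C k) 0) (tens x s) = cscale al%:~R (tens x s).
Proof.
move=> x_wt; rewrite (bracket_diag _ _ (hvec_diag k)).
apply: functional_extensionality => a; apply: functional_extensionality => b.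
by rewrite /cscale /tens scalerA -intrB x_wt.
Qed.

End Matrices.

Section WeightShifts.
Variables (C : fieldType) (r : nat) (M : lmodType C) (rho : cmat C r -> M -> M).
Hypothesis rho_rep : is_rep rho.

Lemma rho0 X : is_sp X -> rho X 0 = 0.
Proof.
case: rho_rep => rho_lin _ _ sp_X.
have : rho X 0 + 0 = rho X 0 + rho X 0.
  by rewrite addr0 -{1}[0 : M]addr0 -{1}[0 : M]scale1r rho_lin // scale1r.
by move/addrI.
Qed.

Lemma rhoZ X k v : is_sp X -> rho X (k *: v) = k *: rho X v.
Proof.
case: (rho_rep) => rho_lin _ _ sp_X.
by rewrite -[k *: v]addr0 rho_lin // rho0 // addr0.
Qed.

Lemma rho_cscale X k v : is_sp X -> rho (cscale k X) v = k *: rho X v.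
Proof.
case: rho_rep => _ rho_add _ sp_X.
have -> : cscale k X = cadd (cscale (k - 1) X) X.
  apply: functional_extensionality => a; apply: functional_extensionality => b.
  by rewrite /cadd /cscale scalerBl scale1r subrK.
by rewrite rho_add // scalerBl scale1r subrK.
Qed.

Lemma act_word_cons X L v : act_word rho (X :: L) v = rho X (act_word rho L v).
Proof. by []. Qed.

Lemma act_word_cat L1 L2 v :
  act_word rho (L1 ++ L2) v = act_word rho L1 (act_word rho L2 v).
Proof. exact: foldr_cat. Qed.

Definition shifts_weight (H : cmat C r) (L : seq (cmat C r)) (al : int) :=
  forall v (c : int), rho H v = c%:~R *: v ->
    rho H (act_word rho L v) = (c + al)%:~R *: act_word rho L v.

Lemma shifts_weight_cat H L1 L2 al1 al2 :
  shifts_weight H L1 al1 -> shifts_weight H L2 al2 ->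
  shifts_weight H (L1 ++ L2) (al1 + al2).
Proof.
move=> shift1 shift2 v c Hv.
by rewrite act_word_cat (shift1 _ _ (shift2 v c Hv)) -addrA (addrC al2).
Qed.

Lemma shifts_weight_flatten H (I : eqType) (s : seq I) (F : I -> seq (cmat C r))
    (al : I -> int) :
  (forall i, i \in s -> shifts_weight H (F i) (al i)) ->
  shifts_weight H (flatten [seq F i | i <- s]) (\sum_(i <- s) al i).
Proof.
elim: s => [_ v c|i s IHs shift_s]; first by rewrite big_nil addr0.
rewrite big_cons; apply: shifts_weight_cat; first exact/shift_s/mem_head.
by apply: IHs => j j_s; apply/shift_s; rewrite in_cons j_s orbT.
Qed.

Lemma shifts_weight_xword k x al s :
  (0 < k)%N -> sp_mat x -> hweight k x al ->
  shifts_weight (tens (hvec C k) 0) (xword x s) ((size s)%:Z * al).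
Proof.
move=> k_gt0 sp_x x_wt; elim: s => [|t s IHs] v c Hv; first by rewrite mul0r addr0.
set H := tens (hvec C k) 0; set u := act_word rho (xword x s) v.
have sp_H : is_sp H by apply/sp_tens/sp_hvec.
have sp_X : is_sp (tens x t) by apply: sp_tens.
have commute : rho H (rho (tens x t) u)
    = al%:~R *: rho (tens x t) u + rho (tens x t) (rho H u).
  case: rho_rep => _ _ rho_br.
  by rewrite -(rho_cscale _ _ sp_X) -(bracket_hvec t x_wt) rho_br // subrK.
rewrite act_word_cons commute (IHs v c Hv) rhoZ // -scalerDl -intrD.
by congr (_%:~R *: _); rewrite /= -addn1 PoszD; ring.
Qed.

Definition lengths (s : nat -> nat -> seq nat) (j i : nat) : int := (size (s j i))%:Z.

Lemma shifts_weight_Xbar k sb j : (0 < k)%N ->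
  shifts_weight (tens (hvec C k) 0) (Xbar C r sb j) (Xbar_weight (lengths sb) k j).
Proof.
move=> k_gt0.
have -> : Xbar_weight (lengths sb) k j
    = \sum_(i <- iota 1 j) (size (sb j i))%:Z * (- eps k i%:Z - eps k j%:Z).
  rewrite /Xbar_weight -sumrN /index_iota subn1 /=.
  by apply: eq_bigr => i _; rewrite !eps_nat // -opprD mulrN.
apply: shifts_weight_flatten => i; rewrite mem_iota => /andP[i_gt0 le_ij].
apply: shifts_weight_xword => //; last exact: hweight_xminusb.
by apply: sp_xminusb; lia.
Qed.

Lemma shifts_weight_Xn k sn j : (0 < k)%N ->
  shifts_weight (tens (hvec C k) 0) (Xn C r sn j) (Xn_weight (lengths sn) k j).
Proof.
move=> k_gt0.
have -> : Xn_weight (lengths sn) k j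
    = \sum_(i <- iota 1 j) (size (sn j i))%:Z * (eps k (j.+1)%:Z - eps k i%:Z).
  rewrite /Xn_weight /index_iota subn1 /=.
  by apply: eq_bigr => i _; rewrite !eps_nat.
apply: shifts_weight_flatten => i; rewrite mem_iota => /andP[i_gt0 _].
apply: shifts_weight_xword => //; last exact: hweight_xminus.
exact: sp_xminus.
Qed.

Lemma shifts_weight_vword k sb sn : (0 < k)%N -> (0 < r)%N ->
  shifts_weight (tens (hvec C k) 0) (vword C r sb sn)
    (\sum_(1 <= j < r.+1) Xbar_weight (lengths sb) k j
     + \sum_(1 <= j < r) Xn_weight (lengths sn) k j).
Proof.
move=> k_gt0 r_gt0.
rewrite big_nat_recr //= addrAC -big_split /=.
rewrite /vword; apply: shifts_weight_cat; last exact: shifts_weight_Xbar.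
rewrite /index_iota subn1.
apply: shifts_weight_flatten => j _; apply: shifts_weight_cat.
- exact: shifts_weight_Xbar.
- exact: shifts_weight_Xn.
Qed.

End WeightShifts.

Theorem lemma3p1 (R : realType) (r : nat) (hr : (1 <= r)%N)
  (M : lmodType R[i]) (rho : cmat R[i] r -> M -> M) (m : nat -> nat) (w : M)
  (Hrep : is_rep rho) (Hweyl : weyl_relations rho m w)
  (eta lp : nat -> nat -> int) (sb sn : nat -> nat -> seq nat)
  (HP : is_POP r (lamb r m) eta lp sb sn) :
  forall j : nat, (1 <= j)%N -> (j <= r)%N ->
    rho (tens (@hvec R[i] r j) 0) (act_word rho (@vword R[i] r sb sn) w)
    = (pattern_weight eta lp j)%:~R *: act_word rho (@vword R[i] r sb sn) w.
Proof.
move=> k k_gt0 le_kr.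
case: HP => [[lp_top _ _] fits_sb fits_sn].
have w_weight : rho (tens (hvec R[i] k) 0) w = (lamb r m k)%:Z%:~R *: w.
  by case: Hweyl => _ _ hvec_w _; rewrite hvec_w.
rewrite (shifts_weight_vword Hrep sb sn k_gt0 hr w_weight) addrA -lp_top //.
rewrite (pattern_weight_of_lengths (eta := eta) _ _ k_gt0 le_kr) // => i j i_gt0 le_ij lt_jr.
- by case/and3P: (fits_sb i j i_gt0 le_ij lt_jr) => /eqP.
- by case/and3P: (fits_sn i j i_gt0 le_ij lt_jr) => /eqP.
Qed.
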